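(* Let $m,n$ be positive integers and $j$ a non-negative integer such that $m\leq n$ and $j<n$. Then $$|\mathrm{Hom}^{j}(P_m,P_n)| = \sum_{t=\max\left\{0,\left\lceil\frac{j-(n-m)}{2}\right\rceil\right\}}^{\left\lceil\frac{m+j}{2}\right\rceil-1}\binom{m-1}{t} - \sum_{t=0}^{\left\lfloor\frac{j-(n-m)}{2}\right\rfloor-1}\binom{m-1}{t} -\sum_{t=0}^{\left\lfloor\frac{m-j-1}{2}\right\rfloor-1}\binom{m-1}{t}.$$
   Context: For a positive integer $n$, $P_n$ denotes the path with vertex set $\{0,1,\dots,n-1\}$ and edge set $\{\{i,i+1\} : i=0,\dots,n-2\}$. A homomorphism from a graph $G$ to a graph $H$ is a map $f:V(G)\to V(H)$ with $\{f(x),f(y)\}\in E(H)$ for every edge $\{x,y\}\in E(G)$. $\mathrm{Hom}^{j}(P_m,P_n)$ denotes the set of homomorphisms $f:P_m\to P_n$ with $f(0)=j$. A sum whose upper limit is smaller than its lower limit is zero, and $\binom{a}{b}=0$ if $b<0$ or $b>a$. *)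

From mathcomp Require Import all_boot all_order all_algebra.
Set Implicit Arguments. Unset Strict Implicit. Unset Printing Implicit Defensive.
Import Order.TTheory GRing.Theory Num.Theory.

Definition path_adj (n : nat) : rel 'I_n :=
  fun x y => (x.+1 == y :> nat) || (y.+1 == x :> nat).

Definition is_hom (m n : nat) (f : {ffun 'I_m -> 'I_n}) : bool :=
  [forall x : 'I_m, forall y : 'I_m, path_adj x y ==> path_adj (f x) (f y)].

Definition Hom_j (m n j : nat) : {set {ffun 'I_m -> 'I_n}} :=
  [set f | is_hom f & [forall x : 'I_m, (val x == 0) ==> (val (f x) == j)]].

Definition floor2 (x : int) : int := (x %/ 2)%Z.
Definition ceil2 (x : int) : int := - ((- x) %/ 2)%Z.

(* \sum_{t = lo}^{hi} F t over integers t >= 0 (all lower limits used are >= 0);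
   empty when hi < lo. *)
Definition isum (lo hi : int) (F : nat -> int) : int :=
  (\sum_(0 <= t < `|hi|.+1 | (lo <= t%:Z)%R && (t%:Z <= hi)%R) F t)%R.

From mathcomp Require Import all_boot all_order all_algebra.
From mathcomp Require Import zify.
Import Order.TTheory GRing.Theory Num.Theory.
Set Implicit Arguments. Unset Strict Implicit. Unset Printing Implicit Defensive.

(* Deleting vertex 0 of P_(m+1) gives the recurrence
     |Hom^x(P_(m+1), P_n)| = |Hom^(x-1)(P_m, P_n)| + |Hom^(x+1)(P_m, P_n)|,
   where the terms with x - 1 = -1 or x + 1 = n are 0, and |Hom^x(P_1, P_n)| = 1.
   With B(k) = sum_(t<k) C(m-1, t), zero for k <= 0, the right-hand side is
     B(ceil((m+x)/2)) - B(ceil((x-n+m)/2)) - B(floor((x-n+m)/2)) - B(floor((m-x-1)/2)).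
   It satisfies the same recurrence by Pascal's rule, because shifting the
   argument of ceil(_/2) or floor(_/2) by 2 shifts its value by 1; it vanishes
   at x = -1 and at x = n by the symmetry B(k) + B(m-k) = 2^(m-1); and it
   equals 1 for m = 1. *)

Section FfunConsBehead.

Variables (T : Type) (k : nat).

Definition ffun_behead (f : {ffun 'I_k.+1 -> T}) : {ffun 'I_k -> T} :=
  [ffun i => f (lift ord0 i)].

Definition ffun_cons (x : T) (g : {ffun 'I_k -> T}) : {ffun 'I_k.+1 -> T} :=
  [ffun i => if unlift ord0 i is Some i' then g i' else x].

Lemma ffun_cons0 x g : ffun_cons x g ord0 = x.
Proof. by rewrite ffunE unlift_none. Qed.

Lemma ffun_cons_lift x g i : ffun_cons x g (lift ord0 i) = g i.
Proof. by rewrite ffunE liftK. Qed.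

Lemma ffun_consK x : cancel (ffun_cons x) ffun_behead.
Proof. by move=> g; apply/ffunP => i; rewrite ffunE ffun_cons_lift. Qed.

Lemma ffun_behead_cons (f : {ffun 'I_k.+1 -> T}) : ffun_cons (f ord0) (ffun_behead f) = f.
Proof.
apply/ffunP => i; case: (unliftP ord0 i) => [i'|] ->.
  by rewrite ffun_cons_lift ffunE.
by rewrite ffun_cons0.
Qed.

End FfunConsBehead.

Lemma path_adj_lift k (a b : 'I_k.+1) :
  path_adj (lift ord0 a) (lift ord0 b) = path_adj a b.
Proof. by rewrite /path_adj !lift0. Qed.

Lemma path_adj_0lift k (b : 'I_k.+1) : path_adj ord0 (lift ord0 b) = (b == ord0).
Proof. by rewrite /path_adj lift0 /= orbF eqSS; case: b => [[]]. Qed.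

Lemma path_adj_sym n : symmetric (@path_adj n).
Proof. by move=> a b; rewrite /path_adj orbC. Qed.

Lemma is_homP m n (f : {ffun 'I_m -> 'I_n}) :
  reflect {homo f : a b / path_adj a b} (is_hom f).
Proof.
apply: (iffP forallP) => [H a b|H a]; first exact/implyP/(forallP (H a)).
by apply/forallP => b; apply/implyP; apply: H.
Qed.

Lemma Hom_jP k n j f :
  reflect (is_hom f /\ val (f ord0) = j) (f \in Hom_j k.+1 n j).
Proof.
rewrite inE; apply: (iffP andP) => -[hom_f f0]; split => //.
  exact/eqP/(implyP (forallP f0 ord0)).
by apply/forallP => i; apply/implyP => /eqP i0; rewrite (_ : i = ord0) ?f0 //; apply: val_inj.
Qed.

Lemma is_hom_behead k n (f : {ffun 'I_k.+2 -> 'I_n}) :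
  is_hom f -> is_hom (ffun_behead f).
Proof.
by move=> /is_homP hom_f; apply/is_homP => a b ab; rewrite !ffunE hom_f ?path_adj_lift.
Qed.

Lemma is_hom_cons k n (x : 'I_n) (g : {ffun 'I_k.+1 -> 'I_n}) :
  is_hom g -> path_adj x (g ord0) -> is_hom (ffun_cons x g).
Proof.
move=> /is_homP hom_g xg0; apply/is_homP => a b.
case: (unliftP ord0 a) => [a'|] ->; case: (unliftP ord0 b) => [b'|] ->.
- by rewrite path_adj_lift !ffun_cons_lift; apply: hom_g.
- by rewrite path_adj_sym path_adj_0lift => /eqP ->; rewrite ffun_cons0 ffun_cons_lift path_adj_sym.
- by rewrite path_adj_0lift => /eqP ->; rewrite ffun_cons0 ffun_cons_lift.
- by rewrite /path_adj.
Qed.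

Definition Hom_j_next k n x y :=
  [set f in Hom_j k.+2 n x | ffun_behead f \in Hom_j k.+1 n y].

Lemma card_Hom_j_next k n (x : 'I_n) y : (x.+1 == y) || (y.+1 == x) ->
  #|Hom_j_next k n x y| = #|Hom_j k.+1 n y|.
Proof.
move=> xy; rewrite -[RHS](card_imset _ (can_inj (ffun_consK x))).
apply: eq_card => f; rewrite inE.
apply/andP/imsetP => [[/Hom_jP[_ f0] fy]|[g /[dup] gy /Hom_jP[hom_g g0] ->]].
  exists (ffun_behead f) => //.
  by rewrite -[LHS]ffun_behead_cons (_ : f ord0 = x) //; apply: val_inj.
rewrite ffun_consK; split => //; apply/Hom_jP; rewrite ffun_cons0.
by split=> //; apply: is_hom_cons; rewrite // /path_adj g0.
Qed.

Lemma Hom_j_behead k n x f : f \in Hom_j k.+2 n x ->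
  exists2 y, (x.+1 == y) || (y.+1 == x) & f \in Hom_j_next k n x y.
Proof.
move=> /[dup] fx /Hom_jP[/[dup] hom_f /is_homP/(_ ord0 (lift ord0 ord0) isT) f01 f0].
exists (val (f (lift ord0 ord0))); first by rewrite -f0.
by rewrite inE fx; apply/Hom_jP; rewrite ffunE; split => //; apply: is_hom_behead.
Qed.

Lemma Hom_j_next_disjoint k n x y z : y != z ->
  Hom_j_next k n x y :&: Hom_j_next k n x z = set0.
Proof.
move=> yz; apply/setP => f; rewrite in_setI in_set0.
by apply/negbTE; apply: contra yz => /andP[/setIdP[_ /Hom_jP[_ <-]] /setIdP[_ /Hom_jP[_ <-]]].
Qed.

Lemma card_Hom_jS k n x : x < n -> #|Hom_j k.+2 n x| =
  ((if x is x'.+1 then #|Hom_j k.+1 n x'| else 0) + #|Hom_j k.+1 n x.+1|)%N.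
Proof.
move=> xn; rewrite -(@card_Hom_j_next k n (Ordinal xn)) ?eqxx //=.
case: x xn => [|x] xn.
  apply: eq_card => f; apply/idP/idP => [fx|]; last by rewrite inE => /andP[].
  by have [[|[|y]] //=] := Hom_j_behead fx.
rewrite -(@card_Hom_j_next k n (Ordinal xn)) ?eqxx ?orbT //=.
rewrite -[RHS]subn0 -(cards0 {ffun 'I_k.+2 -> 'I_n}).
rewrite -(@Hom_j_next_disjoint k n x.+1 x x.+2) ?ltn_eqF // -cardsU.
apply: eq_card => f; rewrite in_setU; apply/idP/orP => [fx|].
  have [y] := Hom_j_behead fx; rewrite /=.
  by case: eqP => [<- _|_ /= /eqP[<-]]; [right|left].
by case; rewrite inE => /andP[].
Qed.

Lemma card_Hom_j1 n x : x < n -> #|Hom_j 1 n x| = 1%N.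
Proof.
move=> xn; apply/eqP/cards1P; exists [ffun=> Ordinal xn]; apply/setP => f.
rewrite in_set1; apply/Hom_jP/eqP => [[_ f0]|->]; last first.
  by split; [apply/is_homP => a b; rewrite !ord1 | rewrite ffunE].
by apply/ffunP => i; rewrite ord1 ffunE; apply: val_inj.
Qed.

Lemma Hom_j_out k n x : n <= x -> Hom_j k.+1 n x = set0.
Proof.
move=> nx; apply/setP => f; rewrite in_set0.
by apply/Hom_jP => -[_ f0]; move: (ltn_ord (f ord0)); rewrite f0 ltnNge nx.
Qed.

Definition binsum (L k : nat) : nat := \sum_(0 <= t < k) 'C(L, t).

Lemma binsumSS L k : binsum L.+1 k.+1 = binsum L k.+1 + binsum L k.
Proof.
rewrite /binsum !big_nat_recl // !bin0 -addnA -big_split.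
by congr (_ + _); apply: eq_bigr => t _; rewrite binS.
Qed.

Lemma binsum_full L k : L < k -> binsum L k = binsum L L.+1.
Proof.
move=> Lk; rewrite /binsum (big_cat_nat (n := L.+1)) //= [X in _ + X]big_nat_cond.
by rewrite [X in _ + X]big1 ?addn0 // => t /andP[/andP[Lt _] _]; apply: bin_small.
Qed.

Lemma binsum_compl L k : k <= L.+1 -> binsum L k + binsum L (L.+1 - k) = binsum L L.+1.
Proof.
move=> kL; rewrite /binsum [RHS](big_cat_nat (n := k)) //=; congr (_ + _).
rewrite -{2}[k]add0n big_addn big_nat_rev /=.
apply: congr_big_nat => // t /andP[_ t_lt].
by rewrite add0n -bin_sub; [congr binomial; lia | lia].
Qed.

Local Open Scope ring_scope.

Definition binsumz (L : nat) (k : int) : int :=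
  if 0 <= k then (binsum L `|k|)%:Z else 0.

Lemma binsumz_le0 L k : k <= 0 -> binsumz L k = 0.
Proof.
rewrite /binsumz; case: ifP => // k_ge0 k_le0.
by rewrite (_ : `|k|%N = 0%N) ?/binsum ?big_geq //; lia.
Qed.

Lemma binsumz_max0 L k : binsumz L (Num.max 0 k) = binsumz L k.
Proof. by case: (lerP k 0) => // k_le0; rewrite !binsumz_le0. Qed.

Lemma binsumzS L k : binsumz L.+1 k = binsumz L k + binsumz L (k - 1).
Proof.
case: (lerP k 0) => k0; first by rewrite !binsumz_le0 //; lia.
rewrite /binsumz !ifT; try lia.
have [k' [-> ->]] : exists k', `|k|%N = k'.+1 /\ `|k - 1|%N = k' by exists `|k - 1|%N; lia.
by rewrite binsumSS PoszD.
Qed.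

Lemma binsumz_full L k : L%:Z < k -> binsumz L k = binsumz L L.+1.
Proof. by move=> Lk; rewrite /binsumz !ifT ?binsum_full //; lia. Qed.

Lemma binsumz_compl L k k' : 0 <= k -> 0 <= k' -> k + k' = L.+1%:Z ->
  binsumz L k + binsumz L k' = binsumz L L.+1.
Proof.
move=> k_ge0 k'_ge0 kk'; rewrite /binsumz !ifT //.
by rewrite -PoszD (_ : `|k'|%N = (L.+1 - `|k|)%N) ?binsum_compl //; lia.
Qed.

Lemma binsumz0 k : 0 < k -> binsumz 0 k = 1.
Proof.
move=> k_gt0; rewrite /binsumz ifT ?ltW //.
have [k' ->] : exists k', `|k|%N = k'.+1 by exists `|k - 1|%N; lia.
by rewrite /binsum big_nat_recl // big1_seq.
Qed.

Lemma ceil2_sub2 y : ceil2 (y - 2) = ceil2 y - 1.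
Proof. rewrite /ceil2; lia. Qed.

Lemma floor2_sub2 y : floor2 (y - 2) = floor2 y - 1.
Proof. rewrite /floor2; lia. Qed.

Lemma ceil2_add_floor2 y : ceil2 y + floor2 y = y.
Proof. rewrite /ceil2 /floor2; lia. Qed.

Lemma binsumz_ceil2S L y :
  binsumz L.+1 (ceil2 y) = binsumz L (ceil2 y) + binsumz L (ceil2 (y - 2)).
Proof. by rewrite binsumzS ceil2_sub2. Qed.

Lemma binsumz_floor2S L y :
  binsumz L.+1 (floor2 y) = binsumz L (floor2 y) + binsumz L (floor2 (y - 2)).
Proof. by rewrite binsumzS floor2_sub2. Qed.

Definition hom_count (n m : nat) (x : int) : int :=
    binsumz m.-1 (ceil2 (m%:Z + x))
  - binsumz m.-1 (ceil2 (x - (n%:Z - m%:Z)))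
  - binsumz m.-1 (floor2 (x - (n%:Z - m%:Z)))
  - binsumz m.-1 (floor2 (m%:Z - x - 1)).

Lemma hom_countSS n m x :
  hom_count n m.+2 x = hom_count n m.+1 (x - 1) + hom_count n m.+1 (x + 1).
Proof.
rewrite /hom_count /= !binsumz_ceil2S !binsumz_floor2S.
have -> : m.+1%:Z + (x + 1) = m.+2%:Z + x by lia.
have -> : m.+1%:Z + (x - 1) = m.+2%:Z + x - 2 by lia.
have -> : x + 1 - (n%:Z - m.+1%:Z) = x - (n%:Z - m.+2%:Z) by lia.
have -> : x - 1 - (n%:Z - m.+1%:Z) = x - (n%:Z - m.+2%:Z) - 2 by lia.
have -> : m.+1%:Z - (x - 1) - 1 = m.+2%:Z - x - 1 by lia.
have -> : m.+1%:Z - (x + 1) - 1 = m.+2%:Z - x - 1 - 2 by lia.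
lia.
Qed.

Lemma hom_count_m1 n m : (m <= n)%N -> hom_count n m (-1) = 0.
Proof.
move=> mn; rewrite /hom_count.
rewrite (@binsumz_le0 _ (ceil2 (-1 - _))); last by rewrite /ceil2; lia.
rewrite (@binsumz_le0 _ (floor2 (-1 - _))); last by rewrite /floor2; lia.
have -> : ceil2 (m%:Z + -1) = floor2 (m%:Z - -1 - 1) by rewrite /ceil2 /floor2; lia.
by rewrite !subr0 subrr.
Qed.

Lemma hom_count_n n m : (0 < m <= n)%N -> hom_count n m n = 0.
Proof.
case: m => // L /= Ln.
rewrite /hom_count /= (@binsumz_le0 _ (floor2 (_ - n%:Z - 1))); last by rewrite /floor2; lia.
rewrite binsumz_full; last by rewrite /ceil2; lia.
have -> : n%:Z - (n%:Z - L.+1%:Z) = L.+1%:Z by lia.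
rewrite -(@binsumz_compl L (ceil2 L.+1) (floor2 L.+1)) ?ceil2_add_floor2 //.
lia.
Qed.

Lemma hom_count1 n (x : nat) : (x < n)%N -> hom_count n 1 x = 1.
Proof.
move=> xn; rewrite /hom_count /= binsumz0; last by rewrite /ceil2; lia.
rewrite (@binsumz_le0 _ (ceil2 _)); last by rewrite /ceil2; lia.
rewrite !binsumz_le0 ?subr0 //; rewrite /floor2; lia.
Qed.

Lemma card_Hom_j_count n m x : (0 < m <= n)%N -> (x < n)%N ->
  #|Hom_j m n x|%:Z = hom_count n m x.
Proof.
case: m => // L /= Ln; elim: L Ln x => [|L IHL] Ln x xn; first by rewrite card_Hom_j1 ?hom_count1.
rewrite card_Hom_jS // hom_countSS PoszD; congr (_ + _).
  case: x xn => [|x] xn; first by rewrite sub0r hom_count_m1 // ltnW.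
  have -> : x.+1%:Z - 1 = x%:Z by lia.
  exact: IHL (ltnW Ln) x (ltnW xn).
have [x1n|nx1] := ltnP x.+1 n.
  have -> : x%:Z + 1 = x.+1%:Z by lia.
  exact: IHL (ltnW Ln) x.+1 x1n.
have -> : x%:Z + 1 = n%:Z by lia.
by rewrite Hom_j_out // cards0 hom_count_n //= ltnW.
Qed.

Lemma isumE (lo hi : int) (F : nat -> int) : 0 <= lo <= hi + 1 ->
  isum lo hi F = \sum_(`|lo| <= t < `|hi + 1|) F t.
Proof.
move=> /andP[lo_ge0 lo_le]; rewrite (big_nat_widenl _ 0) //.
rewrite (big_nat_widen _ _ `|hi|.+1); last by lia.
by apply: eq_bigl => t /=; apply/andP/andP => -[t_ge t_le]; split; lia.
Qed.

Lemma isum_binsumz L (lo hi : int) : 0 <= lo <= hi + 1 ->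
  isum lo hi (fun t => ('C(L, t))%:Z) = binsumz L (hi + 1) - binsumz L lo.
Proof.
move=> lo_hi; rewrite isumE // /binsumz !ifT; try lia.
rewrite /binsum [X in X%:Z - _](big_cat_nat (n := `|lo|%N)) //=; last by lia.
by rewrite PoszD addrAC subrr add0r -natz natr_sum; apply: eq_bigr => t _; rewrite natz.
Qed.

Lemma isum0_binsumz L (hi : int) :
  isum 0 hi (fun t => ('C(L, t))%:Z) = binsumz L (hi + 1).
Proof.
have [hi_lt|hi_ge] := ltrP (hi + 1) 0.
  rewrite binsumz_le0 ?ltW // /isum big_nat_cond big1 // => t /and3P[_ _ t_le]; lia.
by rewrite isum_binsumz ?hi_ge // (@binsumz_le0 _ 0) ?subr0.
Qed.

Theorem corollary1 (m n j : nat) (hm : (0 < m)%N) (hn : (0 < n)%N)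
    (hmn : (m <= n)%N) (hj : (j < n)%N) :
  (#|Hom_j m n j|)%:Z =
      isum (Num.max 0 (ceil2 (j%:Z - (n%:Z - m%:Z)))) (ceil2 (m%:Z + j%:Z) - 1)
           (fun t => ('C(m.-1, t))%:Z)
    - isum 0 (floor2 (j%:Z - (n%:Z - m%:Z)) - 1) (fun t => ('C(m.-1, t))%:Z)
    - isum 0 (floor2 (m%:Z - j%:Z - 1) - 1) (fun t => ('C(m.-1, t))%:Z).
Proof.
rewrite card_Hom_j_count ?hm // !isum0_binsumz isum_binsumz ?subrK ?binsumz_max0 //.
by rewrite le_max lexx ge_max /ceil2; lia.
Qed.
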